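(* Consider the semidiscrete DG scheme described in the context on a single element $\Omega_j$. Suppose that at time $t$ the element values $u^h(\cdot,t)\in\Pi^q$, $v^h(\cdot,t)\in\Pi^s$ on $\Omega_j$ are given, and that the boundary states (fluxes) $v^*$ and $\nabla u^*$ on $\partial\Omega_j$ are given. Then the time derivatives $\partial_t u^h$ and $\partial_t v^h$ on $\Omega_j$ are uniquely determined by the equations (1), (2), (3) below (for all admissible test functions), and the discrete energy $E_j^h(t)=\int_{\Omega_j}\tfrac12 (v^h)^2+\tfrac12 c^2|\nabla u^h|^2$ satisfies \begin{multline*} \frac{dE_j^h}{dt}=\int_{\partial\Omega_j}\Big[-\tfrac12 c^2|\nabla u^h|^2\,\mathbf{w}\cdot\mathbf{n}-\tfrac12 (v^h)^2\,\mathbf{w}\cdot\mathbf{n}+c^2(v^*-v^h)\nabla u^h\cdot\mathbf{n}\\ -c^2\nabla u^h\cdot(\nabla u^*-\nabla u^h)\,\mathbf{w}\cdot\mathbf{n}+c^2 v^h\nabla u^*\cdot\mathbf{n}-v^h(v^*-v^h)\,\mathbf{w}\cdot\mathbf{n}\Big]. \end{multline*}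
   Context: Let $m\ge1$, $c>0$ and a constant vector $\mathbf{w}\in\mathbb{R}^m$. The advective wave equation $(\partial_t+\mathbf{w}\cdot\nabla)^2u=c^2\Delta u$ is written as the first-order-in-time system $\partial_t u+\mathbf{w}\cdot\nabla u-v=0$, $\partial_t v+\mathbf{w}\cdot\nabla v-c^2\Delta u=0$. The domain is partitioned into elements $\Omega_j$; $\mathbf{n}$ denotes the outward unit normal on $\partial\Omega_j$. On $\Omega_j$ the approximations $u^h$ and $v^h$ are polynomials of degree $q$ and $s$ respectively ($\Pi^q$, $\Pi^s$ denote the polynomial spaces of degrees $q$, $s$ in $m$ variables). The local scheme on $\Omega_j$ is: for all $\phi_u\in\Pi^q$, all $\phi_v\in\Pi^s$ and all constants $\tilde\phi_u$, (1) $\int_{\Omega_j}c^2\nabla\phi_u\cdot\nabla(\partial_t u^h+\mathbf{w}\cdot\nabla u^h-v^h)=\int_{\partial\Omega_j}c^2(v^*-v^h)\nabla\phi_u\cdot\mathbf{n}-c^2\nabla\phi_u\cdot(\nabla u^*-\nabla u^h)\,\mathbf{w}\cdot\mathbf{n}$, (2) $\int_{\Omega_j}\phi_v\partial_t v^h+\phi_v\mathbf{w}\cdot\nabla v^h+c^2\nabla u^h\cdot\nabla\phi_v=\int_{\partial\Omega_j}c^2\phi_v\nabla u^*\cdot\mathbf{n}-(v^*-v^h)\phi_v\,\mathbf{w}\cdot\mathbf{n}$, (3) $\int_{\Omega_j}\tilde\phi_u(\partial_t u^h+\mathbf{w}\cdot\nabla u^h-v^h)=0$. Here $v^*$ (scalar)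 and $\nabla u^*$ (vector) are given functions on $\partial\Omega_j$ (the numerical fluxes). *)

From HB Require Import structures.
From mathcomp Require Import all_boot all_order all_algebra.
From mathcomp Require Import mpoly.
From mathcomp Require Import all_classical all_reals all_analysis.

Set Implicit Arguments.
Unset Strict Implicit.
Unset Printing Implicit Defensive.

Import Order.TTheory GRing.Theory Num.Theory.
Local Open Scope ring_scope.

Section DG.
Variables (R : realType) (m : nat).

Local Notation pt := ('I_m -> R).
Local Notation poly := (mpoly.mpoly m R).

Definition inPi (q : nat) (p : poly) : Prop :=
  forall mono : mpoly.multinom m, mono \in mpoly.msupp p -> (mpoly.mdeg mono <= q)%N.

Definition ev (p : poly) (x : pt) : R := mpoly.meval x p.

Definition grad (p : poly) (x : pt) : pt := fun k => ev (mpoly.mderiv k p) x.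

Definition dotp (a b : pt) : R := \sum_(k < m) a k * b k.

Definition advect (w : pt) (p : poly) : poly :=
  \sum_(k < m) w k *: mpoly.mderiv k p.

(* Abstract description of one element Omega_j:
   vol f  = \int_{Omega_j} f,   bdry f = \int_{\partial Omega_j} f,
   nrm x  = outward unit normal n at the boundary point x.
   Required properties: linearity of both integrals, the divergence (Gauss)
   theorem for polynomial integrands, and nondegeneracy of the volume
   integral on polynomials (Omega_j has nonempty interior). *)
Definition element_integrals (vol bdry : (pt -> R) -> R) (nrm : pt -> pt) : Prop :=
  [/\ (forall f g, vol (fun x => f x + g x) = vol f + vol g) /\
        (forall (a : R) f, vol (fun x => a * f x) = a * vol f),
      (forall f g, bdry (fun x => f x + g x) = bdry f + bdry g) /\
        (forall (a : R) f, bdry (fun x => a * f x) = a * bdry f),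
      (forall (p : poly) (k : 'I_m),
          vol (fun x => ev (mpoly.mderiv k p) x) = bdry (fun x => ev p x * nrm x k)),
      (forall p : poly, 0 <= vol (fun x => ev p x ^+ 2)) &
      (forall p : poly, vol (fun x => ev p x ^+ 2) = 0 -> p = 0)].

(* The local DG scheme (1),(2),(3) on the element, at a fixed time:
   u, v = current element values, du, dv = candidate time derivatives,
   vs = v^*, gs = grad u^*. *)
Definition dg_scheme (q s : nat) (c : R) (w : pt)
    (vol bdry : (pt -> R) -> R) (nrm : pt -> pt)
    (u v du dv : poly) (vs : pt -> R) (gs : pt -> pt) : Prop :=
  let r := du + advect w u - v in
  [/\
      (forall phi : poly, inPi q phi ->
         vol (fun x => c ^+ 2 * dotp (grad phi x) (grad r x)) =
         bdry (fun x => c ^+ 2 * (vs x - ev v x) * dotp (grad phi x) (nrm x)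
                        - c ^+ 2 * dotp (grad phi x) (fun k => gs x k - grad u x k)
                          * dotp w (nrm x))),
      (forall phi : poly, inPi s phi ->
         vol (fun x => ev phi x * ev dv x + ev phi x * ev (advect w v) x
                       + c ^+ 2 * dotp (grad u x) (grad phi x)) =
         bdry (fun x => c ^+ 2 * ev phi x * dotp (gs x) (nrm x)
                        - (vs x - ev v x) * ev phi x * dotp w (nrm x))) &
      (forall a : R, vol (fun x => a * ev r x) = 0)].

Definition has_tderiv (P : R -> poly) (t : R) (dP : poly) : Prop :=
  forall mono : mpoly.multinom m,
    is_derive t 1 (fun tau => mpoly.mcoeff mono (P tau)) (mpoly.mcoeff mono dP).

Definition energy (vol : (pt -> R) -> R) (c : R) (U V : R -> poly) (tau : R) : R :=
  vol (fun x => 2^-1 * ev (V tau) x ^+ 2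
                + 2^-1 * c ^+ 2 * dotp (grad (U tau) x) (grad (U tau) x)).

Definition energy_flux (c : R) (w : pt) (nrm : pt -> pt)
    (u v : poly) (vs : pt -> R) (gs : pt -> pt) (x : pt) : R :=
  - 2^-1 * c ^+ 2 * dotp (grad u x) (grad u x) * dotp w (nrm x)
  - 2^-1 * ev v x ^+ 2 * dotp w (nrm x)
  + c ^+ 2 * (vs x - ev v x) * dotp (grad u x) (nrm x)
  - c ^+ 2 * dotp (grad u x) (fun k => gs x k - grad u x k) * dotp w (nrm x)
  + c ^+ 2 * ev v x * dotp (gs x) (nrm x)
  - ev v x * (vs x - ev v x) * dotp w (nrm x).

End DG.

From HB Require Import structures.
From mathcomp Require Import all_boot all_order all_algebra.
From mathcomp Require Import mpoly.
From mathcomp Require Import all_classical all_reals all_analysis.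
From mathcomp Require Import ring.

Set Implicit Arguments.
Unset Strict Implicit.
Unset Printing Implicit Defensive.
Import Order.TTheory GRing.Theory Num.Theory.
Local Open Scope ring_scope.

(* Equation (1) only sees the gradient of du, and both of its sides vanish for
   constant test functions, so it determines du up to a constant; (3) fixes that
   constant.  Folding (3) into the stiffness form gives
   stiff phi r + (int phi) (int r), which is positive definite on polynomials
   since the stiffness form vanishes only on constants and a nonzero constant
   has nonzero integral.  Hence (1)-(3) split into two symmetric positive
   definite Galerkin systems, on Pi^q for du and (with the mass form) on Pi^s
   for dv, each uniquely solvable.  For the energy identity, test (1) with u^h
   and (2) with v^h: the coupling terms c^2 grad u^h . grad v^h cancel, and the
   divergence theorem turns the advection terms v (w . grad v) and
   grad u . grad (w . grad u) into boundary integrals of (1/2) v^2 w.n and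
   (1/2) |grad u|^2 w.n. *)

Lemma square_system_solvable (F : fieldType) (I : finType) (A : I -> I -> F) :
  (forall y : I -> F, (forall k, \sum_l A k l * y l = 0) -> forall l, y l = 0) ->
  forall b : I -> F, exists x : I -> F, forall k, \sum_l A k l * x l = b k.
Proof.
move=> Ainj b.
pose M : 'M[F]_#|I| := \matrix_(l, k) A (enum_val k) (enum_val l).
have ME (y : 'rV_#|I|) k :
    (y *m M) 0 (enum_rank k) = \sum_l A k l * y 0 (enum_rank l).
  rewrite mxE [RHS](reindex (@enum_val I predT)) /=; last exact/onW_bij/enum_val_bij.
  by apply: eq_bigr => l _; rewrite enum_valK mxE enum_rankK mulrC.
have Munit : M \in unitmx.
  rewrite -row_free_unit; apply: inj_row_free => y /rowP yM0.
  apply/rowP => i; rewrite mxE -(enum_valK i).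
  apply: (Ainj (fun l => y 0 (enum_rank l))) => k.
  by rewrite -ME yM0 mxE.
pose bv : 'rV_#|I| := \row_k b (enum_val k).
exists (fun l => (bv *m invmx M) 0 (enum_rank l)) => k.
by rewrite -ME mulmxKV // mxE enum_rankK.
Qed.

Section ScalarFunction.
Variables (R : comNzRingType) (U : lmodType R) (f : U -> R).
Hypothesis f_scalar : scalar f.
Let F : {scalar U} := HB.pack f (GRing.isLinear.Build _ _ _ _ f f_scalar).

Lemma scalarD u v : f (u + v) = f u + f v.
Proof. exact: (linearD F). Qed.

Lemma scalarB u v : f (u - v) = f u - f v.
Proof. exact: (linearB F). Qed.

Lemma scalar_sum (I : finType) (x : I -> R) (e : I -> U) :
  f (\sum_i x i *: e i) = \sum_i x i * f (e i).
Proof. by rewrite -[f]/(F : U -> R) linear_sum; apply: eq_bigr => i _; rewrite linearZ. Qed.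

End ScalarFunction.

Definition linear_functional {T : Type} {R : comNzRingType} (L : (T -> R) -> R) :=
  (forall f g, L (fun x => f x + g x) = L f + L g) /\
  (forall a f, L (fun x => a * f x) = a * L f).

Section LinearFunctional.
Variables (T : Type) (R : comNzRingType) (L : (T -> R) -> R).

Lemma eq_functional f g : f =1 g -> L f = L g.
Proof. by move=> fg; congr L; apply: funext. Qed.

Hypothesis L_linear : linear_functional L.

Lemma functionalD f g : L (fun x => f x + g x) = L f + L g.
Proof. by case: L_linear. Qed.

Lemma functionalZ a f : L (fun x => a * f x) = a * L f.
Proof. by case: L_linear. Qed.

Lemma functional0 : L (fun=> 0) = 0.
Proof.
rewrite -[RHS](mul0r (L (fun=> 0))) -functionalZ.
by apply: eq_functional => x; rewrite mul0r.
Qed.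

Lemma functional_sum (I : finType) (F : I -> T -> R) :
  L (fun x => \sum_i F i x) = \sum_i L (F i).
Proof. by rewrite -fct_sumE (big_morph L functionalD functional0). Qed.

End LinearFunctional.

Section PolynomialSpace.
Variables (R : realType) (m : nat).
Local Notation poly := {mpoly R[m]}.
Implicit Types (p r : poly) (q : nat).

Lemma inPi_monomialE q p : inPi q p -> p = \sum_(i : 'X_{1..m < q.+1}) p@_i *: 'X_[i].
Proof.
move=> p_q; apply: mpolywE; rewrite msizeE; apply/bigmax_leqP_seq => mo mo_p _.
by rewrite ltnS p_q.
Qed.

Lemma mcoeff_monomial_sum q (x : 'X_{1..m < q.+1} -> R) (k : 'X_{1..m < q.+1}) :
  (\sum_i x i *: 'X_[i] : poly)@_k = x k.
Proof.
rewrite raddf_sum (bigD1 k) //= mcoeffZ mcoeffX eqxx mulr1 big1 ?addr0 // => i ik.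
by rewrite mcoeffZ mcoeffX -bmeqP (negbTE ik) mulr0.
Qed.

Lemma inPi_monomial_sum q (x : 'X_{1..m < q.+1} -> R) :
  inPi q (\sum_i x i *: 'X_[i] : poly).
Proof.
move=> mo /msupp_sum_le /flattenP [s /mapP [i _ ->]] /msuppZ_le.
by rewrite msuppX mem_seq1 => /eqP ->; rewrite -ltnS bmdeg.
Qed.

Lemma inPiB q p r : inPi q p -> inPi q r -> inPi q (p - r).
Proof. by move=> p_q r_q mo /msuppB_le; rewrite mem_cat => /orP [/p_q | /r_q]. Qed.

Lemma inPiC q (a : R) : inPi q (a%:MP : poly).
Proof.
by move=> mo; rewrite msuppC; case: eqP => // _; rewrite mem_seq1 => /eqP ->; rewrite mdeg0.
Qed.

Lemma mderiv_eq0_polyC p : (forall k, p^`M(k) = 0) -> p = (p@_0)%:MP.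
Proof.
move=> p'0; apply: msize1_polyC; rewrite msizeE; apply/bigmax_leqP_seq => mo mo_p _.
rewrite ltnS leqn0 mdeg_eq0; apply/eqP/mnmP => k; rewrite mnm0E.
apply/eqP; apply: contraTT mo_p => mok; rewrite mcoeff_msupp negbK.
have := congr1 (mcoeff (mo - U_(k))%MM) (p'0 k).
by rewrite mcoeff_deriv mcoeff0 submK ?lep1mP // => /eqP; rewrite mulrn_eq0.
Qed.

Lemma scalar_monomial_ext q (f g : poly -> R) : scalar f -> scalar g ->
  (forall k : 'X_{1..m < q.+1}, f 'X_[k] = g 'X_[k]) ->
  forall phi, inPi q phi -> f phi = g phi.
Proof.
move=> f_lin g_lin fg phi /inPi_monomialE ->.
by rewrite !scalar_sum //; apply: eq_bigr => k _; rewrite fg.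
Qed.

Lemma tderiv_inPi q (P : R -> poly) t dP :
  (forall tau, inPi q (P tau)) -> has_tderiv P t dP -> inPi q dP.
Proof.
move=> P_q dP_P mo; rewrite mcoeff_msupp; apply: contraNT; rewrite -ltnNge => q_lt.
have P0 : (fun tau => (P tau)@_mo) = cst 0.
  apply/funext => tau /=; apply/eqP; apply: contraTT q_lt.
  by rewrite -mcoeff_msupp -leqNgt => /P_q.
by have := dP_P mo; rewrite P0 => d0; rewrite -(derive_val (is_derive := d0)) derive_cst.
Qed.

Lemma dotp_gradP (a : R) p r x (y : 'I_m -> R) :
  dotp (grad (a *: p + r) x) y = a * dotp (grad p x) y + dotp (grad r x) y.
Proof.
rewrite /dotp mulr_sumr -big_split; apply: eq_bigr => k _ /=.
by rewrite /grad /ev mderivD mderivZ mevalD mevalZ; ring.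
Qed.

Lemma dotp_grad_polyC (a : R) x (y : 'I_m -> R) : dotp (grad (a%:MP : poly) x) y = 0.
Proof. by rewrite /dotp big1 // => k _; rewrite /grad mderivC /ev meval0 mul0r. Qed.

Lemma advectZ (w : 'I_m -> R) (a : R) p : advect w (a *: p) = a *: advect w p.
Proof.
by rewrite /advect scaler_sumr; apply: eq_bigr => k _; rewrite mderivZ !scalerA mulrC.
Qed.

Lemma advectM (w : 'I_m -> R) p r : advect w (p * r) = advect w p * r + p * advect w r.
Proof.
rewrite /advect mulr_suml mulr_sumr -big_split; apply: eq_bigr => k _ /=.
by rewrite mderivM scalerDr -scalerAl -scalerAr.
Qed.

Lemma mderiv_advect (w : 'I_m -> R) p k : (advect w p)^`M(k) = advect w p^`M(k).
Proof.
by rewrite /advect linear_sum; apply: eq_bigr => j _; rewrite linearZ /= mderiv_comm.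
Qed.

Lemma ev_advect (w : 'I_m -> R) p x : ev (advect w p) x = \sum_k w k * ev p^`M(k) x.
Proof. by rewrite /advect /ev raddf_sum; apply: eq_bigr => k _; rewrite /= mevalZ. Qed.

End PolynomialSpace.

Lemma is_derive_finsum (R : realType) (I : finType) (h : I -> R -> R) (dh : I -> R) (t : R) :
  (forall i, is_derive t 1 (h i) (dh i)) ->
  is_derive t 1 (fun tau => \sum_i h i tau) (\sum_i dh i).
Proof.
move=> dh_h; rewrite -fct_sumE.
by elim/big_ind2 : _ => // [|f1 d1 f2 d2 ? ?]; [exact: is_derive_cst | exact: is_deriveD].
Qed.

Section SymmetricForm.
Variables (R : realType) (m q : nat) (B : {mpoly R[m]} -> {mpoly R[m]} -> R).
Hypotheses (BC : forall p r, B p r = B r p) (B_linear : forall p, scalar (B p)).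
Local Notation poly := {mpoly R[m]}.
Local Notation monomial := 'X_{1..m < q.+1}.

Lemma form_linear_l r : scalar (B^~ r).
Proof. by move=> a p1 p2; rewrite !(BC _ r) B_linear. Qed.

Lemma definite_form_solvable (l : poly -> R) :
  (forall p, inPi q p -> B p p = 0 -> p = 0) -> scalar l ->
  exists2 p, inPi q p & forall p', inPi q p' ->
    (forall phi, inPi q phi -> B phi p' = l phi) <-> p' = p.
Proof.
move=> B_def l_linear.
have BE (x : monomial -> R) (k : monomial) :
    \sum_(j : monomial) B 'X_[k] 'X_[j] * x j = B 'X_[k] (\sum_j x j *: 'X_[j]).
  by rewrite scalar_sum //; apply: eq_bigr => j _; rewrite mulrC.
have [|x Bx] := @square_system_solvable _ _
    (fun k j : monomial => B 'X_[k] 'X_[j]) _ (fun k => l 'X_[k]).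
  move=> y By0 j; rewrite -(mcoeff_monomial_sum y) [X in X@__](_ : _ = 0) ?mcoeff0 //.
  apply: (B_def); first exact: inPi_monomial_sum.
  apply: (scalar_monomial_ext (g := fun=> 0)); last exact: inPi_monomial_sum.
  - exact: B_linear.
  - by move=> a p1 p2; rewrite mulr0 addr0.
  - by move=> k; rewrite BC -BE.
pose p : poly := \sum_j x j *: 'X_[j].
have p_q : inPi q p by exact: inPi_monomial_sum.
have Bp : forall phi, inPi q phi -> B phi p = l phi.
  by apply: scalar_monomial_ext (form_linear_l _) l_linear _ => k; rewrite -BE.
exists p => // p' p'_q; split => [Bp' | ->] //.
have pp'_q : inPi q (p' - p) by apply: inPiB.
apply/eqP; rewrite -subr_eq0; apply/eqP/B_def => //.
by rewrite scalarB // Bp' // Bp // subrr.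
Qed.

Lemma form_monomialE p r : inPi q p -> inPi q r ->
  B p r = \sum_(i : monomial) \sum_(j : monomial) p@_i * r@_j * B 'X_[i] 'X_[j].
Proof.
move=> /inPi_monomialE {1}-> /inPi_monomialE {1}->.
rewrite (scalar_sum (form_linear_l _)); apply: eq_bigr => i _.
rewrite (scalar_sum (B_linear _)) mulr_sumr.
by apply: eq_bigr => j _; rewrite mulrA.
Qed.

Lemma is_derive_form (P : R -> poly) t dP :
  (forall tau, inPi q (P tau)) -> has_tderiv P t dP ->
  is_derive t 1 (fun tau => B (P tau) (P tau)) (B (P t) dP *+ 2).
Proof.
move=> P_q dP_P; have dP_q := tderiv_inPi P_q dP_P.
under eq_fun do rewrite form_monomialE //.
apply: is_derive_eq.
  apply: is_derive_finsum => i; apply: is_derive_finsum => j.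
  exact: is_deriveM (is_deriveM (dP_P i) (dP_P j)) (is_derive_cst _ _ _).
rewrite mulr2n {1}BC !form_monomialE // -big_split; apply: eq_bigr => i _.
rewrite -big_split; apply: eq_bigr => j _ /=.
rewrite /GRing.scale /=; ring.
Qed.

End SymmetricForm.

Section Element.
Variables (R : realType) (m : nat).
Local Notation pt := ('I_m -> R).
Local Notation poly := {mpoly R[m]}.
Variables (vol bdry : (pt -> R) -> R) (nrm : pt -> pt).
Hypothesis hE : element_integrals vol bdry nrm.
Implicit Types (p r : poly).

Let vol_linear : linear_functional vol. Proof. by case: hE. Qed.
Let bdry_linear : linear_functional bdry. Proof. by case: hE. Qed.

Definition mass p r := vol (fun x => ev p x * ev r x).
Definition stiff p r := vol (fun x => dotp (grad p x) (grad r x)).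
Definition int_poly p := vol (fun x => ev p x).

Lemma massC p r : mass p r = mass r p.
Proof. by apply: eq_functional => x; rewrite mulrC. Qed.

Lemma mass_linear p : scalar (mass p).
Proof.
move=> a r1 r2; rewrite /mass -functionalZ // -functionalD //.
by apply: eq_functional => x; rewrite /ev mevalD mevalZ; ring.
Qed.

Lemma mass_ge0 p : 0 <= mass p p.
Proof. by have [_ _ _ sq_ge0 _] := hE; apply: sq_ge0. Qed.

Lemma mass_eq0 p : mass p p = 0 -> p = 0.
Proof. by have [_ _ _ _ sq_def] := hE; apply: sq_def. Qed.

Lemma stiffE p r : stiff p r = \sum_k mass p^`M(k) r^`M(k).
Proof. by rewrite -functional_sum. Qed.

Lemma stiffC p r : stiff p r = stiff r p.
Proof. by rewrite !stiffE; apply: eq_bigr => k _; rewrite massC. Qed.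

Lemma stiff_linear p : scalar (stiff p).
Proof.
move=> a r1 r2; rewrite !stiffE mulr_sumr -big_split; apply: eq_bigr => k _ /=.
by rewrite mderivD mderivZ mass_linear.
Qed.

Lemma stiff_ge0 p : 0 <= stiff p p.
Proof. by rewrite stiffE; apply: sumr_ge0 => k _; apply: mass_ge0. Qed.

Lemma stiff_polyC (a : R) r : stiff a%:MP r = 0.
Proof.
rewrite stiffE big1 // => k _; rewrite mderivC /mass -(functional0 vol_linear).
by apply: eq_functional => x; rewrite /ev meval0 mul0r.
Qed.

Lemma int_poly_linear : scalar int_poly.
Proof.
move=> a p1 p2; rewrite /int_poly -functionalZ // -functionalD //.
by apply: eq_functional => x; rewrite /ev mevalD mevalZ.
Qed.

Lemma int_polyC (a : R) : int_poly a%:MP = a * vol (fun=> 1).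
Proof.
by rewrite -functionalZ //; apply: eq_functional => x; rewrite /ev mevalC mulr1.
Qed.

Lemma vol1_gt0 : 0 < vol (fun=> 1).
Proof.
have [_ _ _ sq_ge0 sq_def] := hE.
have -> : vol (fun=> 1) = vol (fun x => ev (1%:MP : poly) x ^+ 2).
  by apply: eq_functional => x; rewrite /ev mevalC expr1n.
rewrite lt0r sq_ge0 andbT; apply: contraTneq isT => /sq_def /eqP.
by rewrite mpolyC_eq0 oner_eq0.
Qed.

Lemma stiff_int_poly_eq0 p : stiff p p = 0 -> int_poly p = 0 -> p = 0.
Proof.
rewrite stiffE => /psumr_eq0P p'0.
have {}p'0 k : p^`M(k) = 0 by apply: mass_eq0; apply: p'0 => // j _; apply: mass_ge0.
rewrite (mderiv_eq0_polyC p'0) int_polyC => /eqP.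
by rewrite mulf_eq0 (gt_eqF vol1_gt0) orbF => /eqP ->.
Qed.

Variable w : pt.

Lemma int_poly_advect p :
  int_poly (advect w p) = bdry (fun x => ev p x * dotp w (nrm x)).
Proof.
have [_ _ gauss _ _] := hE.
rewrite /int_poly; under eq_functional do rewrite ev_advect.
rewrite functional_sum //.
under [RHS]eq_functional do rewrite /dotp mulr_sumr.
rewrite functional_sum //; apply: eq_bigr => k _.
rewrite functionalZ // gauss -functionalZ //.
by apply: eq_functional => x; ring.
Qed.

Lemma mass_advect_self p :
  mass p (advect w p) = bdry (fun x => 2^-1 * ev p x ^+ 2 * dotp w (nrm x)).
Proof.
have -> : mass p (advect w p) = int_poly (advect w (2^-1 *: (p * p))).
  rewrite advectZ advectM; apply: eq_functional => x.
  by rewrite /ev mevalZ mevalD !mevalM; field.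
rewrite int_poly_advect; apply: eq_functional => x.
by rewrite /ev mevalZ mevalM; ring.
Qed.

Lemma stiff_advect_self p :
  stiff p (advect w p) =
  bdry (fun x => 2^-1 * dotp (grad p x) (grad p x) * dotp w (nrm x)).
Proof.
rewrite stiffE; under eq_bigr do rewrite mderiv_advect mass_advect_self.
rewrite -functional_sum //; apply: eq_functional => x.
rewrite /dotp -mulr_suml -mulr_sumr.
by congr (_ * _ * _); apply: eq_bigr => k _; rewrite expr2.
Qed.

Lemma energyE c (U V : R -> poly) tau :
  energy vol c U V tau =
  2^-1 * mass (V tau) (V tau) + 2^-1 * c ^+ 2 * stiff (U tau) (U tau).
Proof. by rewrite -!functionalZ // -functionalD. Qed.

Lemma is_derive_energy q s c (U V : R -> poly) t du dv :
  (forall tau, inPi q (U tau)) -> (forall tau, inPi s (V tau)) ->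
  has_tderiv U t du -> has_tderiv V t dv ->
  is_derive t 1 (energy vol c U V) (mass (V t) dv + c ^+ 2 * stiff (U t) du).
Proof.
move=> U_q V_q dU dV.
have dV2 := is_derive_form massC mass_linear V_q dV.
have dU2 := is_derive_form stiffC stiff_linear U_q dU.
have -> : energy vol c U V = 2^-1 \*: (fun tau => mass (V tau) (V tau)) +
    (2^-1 * c ^+ 2) \*: (fun tau => stiff (U tau) (U tau)).
  by apply/funext => tau; rewrite energyE.
by apply: is_derive_eq; rewrite /GRing.scale /=; field.
Qed.

Definition stiff_aug p r := stiff p r + int_poly p * int_poly r.

Lemma stiff_augC p r : stiff_aug p r = stiff_aug r p.
Proof. by rewrite /stiff_aug stiffC mulrC. Qed.

Lemma stiff_aug_linear p : scalar (stiff_aug p).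
Proof.
move=> a r1 r2; rewrite /stiff_aug stiff_linear int_poly_linear; ring.
Qed.

Lemma stiff_aug_eq0 p : stiff_aug p p = 0 -> p = 0.
Proof.
move=> /eqP; rewrite /stiff_aug -expr2 paddr_eq0 ?sqr_ge0 ?stiff_ge0 // sqrf_eq0.
by move=> /andP [/eqP stiff0 /eqP int0]; apply: stiff_int_poly_eq0.
Qed.

Section Scheme.
Variables (q s : nat) (c : R) (u v : poly) (vs : pt -> R) (gs : pt -> pt).

Definition bflux_u phi := bdry (fun x =>
  c ^+ 2 * (vs x - ev v x) * dotp (grad phi x) (nrm x)
  - c ^+ 2 * dotp (grad phi x) (fun k => gs x k - grad u x k) * dotp w (nrm x)).

Definition bflux_v phi := bdry (fun x =>
  c ^+ 2 * ev phi x * dotp (gs x) (nrm x) - (vs x - ev v x) * ev phi x * dotp w (nrm x)).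

Lemma bflux_u_linear : scalar bflux_u.
Proof.
move=> a p1 p2; rewrite /bflux_u -functionalZ // -functionalD //.
by apply: eq_functional => x; rewrite !dotp_gradP; ring.
Qed.

Lemma bflux_u_polyC (a : R) : bflux_u a%:MP = 0.
Proof.
rewrite /bflux_u -(functional0 bdry_linear); apply: eq_functional => x.
by rewrite !dotp_grad_polyC; ring.
Qed.

Lemma bflux_v_linear : scalar bflux_v.
Proof.
move=> a p1 p2; rewrite /bflux_v -functionalZ // -functionalD //.
by apply: eq_functional => x; rewrite /ev mevalD mevalZ; ring.
Qed.

Lemma dg_schemeE du dv :
  dg_scheme q s c w vol bdry nrm u v du dv vs gs <->
  [/\ forall phi, inPi q phi -> c ^+ 2 * stiff phi (du + advect w u - v) = bflux_u phi,
      forall phi, inPi s phi ->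
        mass phi dv + mass phi (advect w v) + c ^+ 2 * stiff u phi = bflux_v phi &
      int_poly (du + advect w u - v) = 0].
Proof.
rewrite /dg_scheme /bflux_u /bflux_v /=; split => [[h1 h2 h3] | [h1 h2 h3]]; split.
- by move=> phi /h1 <-; rewrite -functionalZ.
- by move=> phi /h2 <-; rewrite -functionalZ // -!functionalD.
- by have := h3 1; rewrite functionalZ // mul1r.
- by move=> phi /h1 <-; rewrite -functionalZ.
- by move=> phi /h2 <-; rewrite -functionalZ // -!functionalD.
- by move=> a; rewrite functionalZ // -/(int_poly _) h3 mulr0.
Qed.

Lemma dg_energy_rate du dv : inPi q u -> inPi s v ->
  dg_scheme q s c w vol bdry nrm u v du dv vs gs ->
  mass v dv + c ^+ 2 * stiff u du = bdry (energy_flux c w nrm u v vs gs).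
Proof.
move=> u_q v_s /dg_schemeE [h1 h2 _].
have := h1 _ u_q; have := h2 _ v_s.
rewrite mass_advect_self (scalarB (stiff_linear u)) (scalarD (stiff_linear u)).
rewrite stiff_advect_self => eq_v eq_u.
transitivity (bflux_u u + bflux_v v
  + (- c ^+ 2) * bdry (fun x => 2^-1 * dotp (grad u x) (grad u x) * dotp w (nrm x))
  + (- 1) * bdry (fun x => 2^-1 * ev v x ^+ 2 * dotp w (nrm x))).
  by rewrite -eq_u -eq_v; ring.
rewrite /bflux_u /bflux_v -!functionalZ // -!functionalD //.
by apply: eq_functional => x; rewrite /energy_flux; ring.
Qed.

Hypothesis c_neq0 : c != 0.

Lemma residual_u_eqP r :
  (forall phi, inPi q phi -> c ^+ 2 * stiff phi r = bflux_u phi) /\ int_poly r = 0 <->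
  forall phi, inPi q phi -> stiff_aug phi r = bflux_u phi / c ^+ 2.
Proof.
have c2_neq0 : c ^+ 2 != 0 by rewrite expf_neq0.
split => [[h1 h3] phi phi_q | h].
  by rewrite /stiff_aug h3 mulr0 addr0 -h1 // mulrAC divff ?mul1r.
have r0 : int_poly r = 0.
  have := h _ (@inPiC _ _ q 1).
  rewrite /stiff_aug stiff_polyC bflux_u_polyC mul0r add0r int_polyC.
  by move/eqP; rewrite mul1r mulf_eq0 (gt_eqF vol1_gt0) => /eqP.
split=> // phi /h; rewrite /stiff_aug r0 mulr0 addr0 => ->.
by rewrite mulrC divfK.
Qed.

Definition load_u phi := bflux_u phi / c ^+ 2 - stiff_aug phi (advect w u - v).
Definition load_v phi := bflux_v phi - mass phi (advect w v) - c ^+ 2 * stiff u phi.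

Lemma load_u_linear : scalar load_u.
Proof.
move=> a p1 p2; rewrite /load_u bflux_u_linear !(stiff_augC _ (advect w u - v)).
by rewrite stiff_aug_linear; ring.
Qed.

Lemma load_v_linear : scalar load_v.
Proof.
move=> a p1 p2; rewrite /load_v bflux_v_linear stiff_linear !(massC _ (advect w v)).
by rewrite mass_linear; ring.
Qed.

Lemma dg_schemeP du dv :
  dg_scheme q s c w vol bdry nrm u v du dv vs gs <->
  (forall phi, inPi q phi -> stiff_aug phi du = load_u phi) /\
  (forall phi, inPi s phi -> mass phi dv = load_v phi).
Proof.
have load_uE phi : stiff_aug phi du = load_u phi <->
    stiff_aug phi (du + (advect w u - v)) = bflux_u phi / c ^+ 2.
  rewrite (scalarD (stiff_aug_linear phi)) /load_u.
  by split=> [-> | <-]; rewrite ?subrK ?addrK.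
have load_vE phi : mass phi dv = load_v phi <->
    mass phi dv + mass phi (advect w v) + c ^+ 2 * stiff u phi = bflux_v phi.
  by rewrite /load_v; split=> [-> | <-]; ring.
rewrite dg_schemeE -addrA; split=> [[h1 h2 h3] | [du_eq dv_eq]].
  have h := proj1 (residual_u_eqP _) (conj h1 h3).
  by split=> phi phi_q; [apply/load_uE/h | apply/load_vE/h2].
have [h1 h3] := proj2 (residual_u_eqP _)
  (fun phi phi_q => proj1 (load_uE phi) (du_eq _ phi_q)).
by split=> // phi phi_q; apply/load_vE/dv_eq.
Qed.

Lemma dg_scheme_solvable : exists du dv, [/\ inPi q du, inPi s dv,
  dg_scheme q s c w vol bdry nrm u v du dv vs gs &
  forall du' dv', inPi q du' -> inPi s dv' ->
    dg_scheme q s c w vol bdry nrm u v du' dv' vs gs -> du' = du /\ dv' = dv].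
Proof.
have [du du_q du_sol] := definite_form_solvable (q := q) stiff_augC stiff_aug_linear
  (fun p _ => @stiff_aug_eq0 p) load_u_linear.
have [dv dv_s dv_sol] := definite_form_solvable (q := s) massC mass_linear
  (fun p _ => @mass_eq0 p) load_v_linear.
exists du, dv; split => //.
  by apply/dg_schemeP; split; [apply/(du_sol _ du_q) | apply/(dv_sol _ dv_s)].
move=> du' dv' du'_q dv'_s /dg_schemeP [h1 h2].
by split; [apply/(du_sol _ du'_q) | apply/(dv_sol _ dv'_s)].
Qed.

End Scheme.

End Element.

Theorem theorem2p1 (R : realType) (m q s : nat) (c : R) (w : 'I_m -> R)
    (vol bdry : (('I_m -> R) -> R) -> R) (nrm : ('I_m -> R) -> ('I_m -> R))
    (U V : R -> mpoly.mpoly m R)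
    (vs : R -> ('I_m -> R) -> R) (gs : R -> ('I_m -> R) -> ('I_m -> R)) (t : R) :
  (0 < m)%N -> 0 < c ->
  element_integrals vol bdry nrm ->
  (forall tau, inPi q (U tau)) -> (forall tau, inPi s (V tau)) ->
  (* the time derivatives are uniquely determined by (1),(2),(3) *)
  (exists du dv, [/\ inPi q du, inPi s dv,
     dg_scheme q s c w vol bdry nrm (U t) (V t) du dv (vs t) (gs t) &
     forall du' dv', inPi q du' -> inPi s dv' ->
       dg_scheme q s c w vol bdry nrm (U t) (V t) du' dv' (vs t) (gs t) ->
       du' = du /\ dv' = dv])
  /\
  (* energy identity *)
  (forall du dv, has_tderiv U t du -> has_tderiv V t dv ->
     dg_scheme q s c w vol bdry nrm (U t) (V t) du dv (vs t) (gs t) ->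
     is_derive t 1 (energy vol c U V)
       (bdry (energy_flux c w nrm (U t) (V t) (vs t) (gs t)))).
Proof.
move=> _ c_gt0 hE U_q V_q; split.
  by apply: (dg_scheme_solvable hE); rewrite gt_eqF.
move=> du dv dU dV scheme.
rewrite -(dg_energy_rate hE (U_q t) (V_q t) scheme).
exact: (is_derive_energy hE c U_q V_q dU dV).
Qed.
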